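(* Let $T$ be the tournament on vertex set $\{0,1,2,3,4,5\}$ with arc set $\{(0,1),(0,3),(1,2),(1,5),(2,0),(2,4),(3,1),(3,2),(3,4),(4,0),(4,1),(4,5),(5,0),(5,2),(5,3)\}$. For every $n\geq 3$, there is a homomorphism from the directed cycle $\overrightarrow{C}_n$ to $T$.
   Context: $\overrightarrow{C}_n$ is the directed cycle on $n$ vertices (asymmetric). A homomorphism from a digraph $D$ to a digraph $H$ is a map $\phi:V(D)\to V(H)$ such that $(\phi(u),\phi(v))\in A(H)$ whenever $(u,v)\in A(D)$. *)

From mathcomp Require Import all_boot.
Set Implicit Arguments. Unset Strict Implicit. Unset Printing Implicit Defensive.

Definition dcycle (n : nat) : rel 'I_n :=
  fun i j => (j : nat) == (i.+1 %% n).

Definition T_arcs : seq (nat * nat) :=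
  [:: (0,1); (0,3); (1,2); (1,5); (2,0); (2,4); (3,1); (3,2); (3,4);
      (4,0); (4,1); (4,5); (5,0); (5,2); (5,3)].

Definition T_rel : rel 'I_6 := fun u v => ((u : nat), (v : nat)) \in T_arcs.

Definition is_hom (V W : Type) (E : rel V) (F : rel W) (phi : V -> W) : Prop :=
  forall u v, E u v -> F (phi u) (phi v).

(* The tournament T has closed walks of lengths 3, 4 and 5 through vertex 0, namely
   0 1 2, 0 3 2 4 and 0 3 1 2 4.  Every n >= 3 is 3 + (n mod 3) plus a multiple of 3,
   so prefixing the appropriate short walk with copies of the triangle 0 1 2 gives a
   closed walk of length n, and winding C_n around it is a homomorphism. *)
From mathcomp Require Import all_boot.

Set Implicit Arguments.
Unset Strict Implicit.
Unset Printing Implicit Defensive.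

Lemma ohead_cat (T : Type) (u v : seq T) :
  ohead u = ohead v -> ohead (u ++ v) = ohead v.
Proof. by case: u. Qed.

Lemma size_iter_cat (T : Type) (s t : seq T) k :
  size (iter k (cat s) t) = size s * k + size t.
Proof. by elim: k => [|k IH]; rewrite ?muln0 //= size_cat IH mulnS addnA. Qed.

Section ClosedWalks.
Variables (W : eqType) (F : rel W).

Lemma nth_cycle x0 s i : cycle F s -> i < size s ->
  F (nth x0 s i) (nth x0 s (i.+1 %% size s)).
Proof.
case: s => [//|x s] /(pathP x0) walk lt_i.
have := walk i; rewrite size_rcons -rcons_cons !nth_rcons lt_i => /(_ isT).
move: lt_i; rewrite ltnS leq_eqVlt => /predU1P[->|lt_is].
  by rewrite ltnn eqxx modnn.
by rewrite lt_is modn_small.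
Qed.

Lemma cycle_hom n x0 s : size s = n -> cycle F s ->
  is_hom (@dcycle n) F (fun i => nth x0 s i).
Proof. by move=> <- walk u v /eqP ->; apply: nth_cycle. Qed.

Lemma cycle_cat (u v : seq W) :
  ohead u = ohead v -> cycle F u -> cycle F v -> cycle F (u ++ v).
Proof.
case: u => [//|x s]; case: v => [//|y t] [<-] /=.
by rewrite rcons_cat /= -cat_rcons cat_path last_rcons => -> ->.
Qed.

Lemma cycle_iter_cat (u v : seq W) k :
  ohead u = ohead v -> cycle F u -> cycle F v -> cycle F (iter k (cat u) v).
Proof.
move=> same_head walk_u; elim: k v same_head => // k IH v same_head walk_v.
rewrite iterSr; apply: IH; first by rewrite ohead_cat.
exact: cycle_cat.
Qed.

End ClosedWalks.

Definition T_arc : rel nat := fun a b => (a, b) \in T_arcs.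

Definition T_walk (s : seq nat) : seq 'I_6 := map inord s.

Lemma cycle_T_walk s :
  all (fun a => a < 6) s -> cycle T_arc s -> cycle T_rel (T_walk s).
Proof.
rewrite cycle_map => small; apply: sub_in_cycle small => a b a_lt6 b_lt6.
by rewrite /= /T_rel !inordK.
Qed.

Definition T_triangle : seq 'I_6 := T_walk [:: 0; 1; 2].

Definition T_short_cycle (r : nat) : seq 'I_6 :=
  match r with
  | 0 => T_triangle
  | 1 => T_walk [:: 0; 3; 2; 4]
  | _ => T_walk [:: 0; 3; 1; 2; 4]
  end.

Definition T_closed_walk (n : nat) : seq 'I_6 :=
  iter (n %/ 3).-1 (cat T_triangle) (T_short_cycle (n %% 3)).

Lemma size_T_closed_walk n : 3 <= n -> size (T_closed_walk n) = n.
Proof.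
move=> n_ge3; have q_gt0 : 0 < n %/ 3 by rewrite divn_gt0.
have size_short : size (T_short_cycle (n %% 3)) = 3 + n %% 3.
  by have := ltn_pmod n (isT : 0 < 3); case: (n %% 3) => [|[|[|]]].
rewrite size_iter_cat size_short addnA -mulnSr prednK // mulnC.
by rewrite [RHS](divn_eq n 3).
Qed.

Lemma cycle_T_closed_walk n : cycle T_rel (T_closed_walk n).
Proof.
rewrite /T_closed_walk; case: (n %% 3) => [|[|r]];
  by apply: cycle_iter_cat => //; apply: cycle_T_walk.
Qed.

Theorem mainTheorem17 : forall n : nat, 3 <= n ->
  exists phi : 'I_n -> 'I_6, is_hom (@dcycle n) T_rel phi.
Proof.
move=> n n_ge3; exists (fun i => nth ord0 (T_closed_walk n) i).
exact: cycle_hom (size_T_closed_walk n_ge3) (cycle_T_closed_walk n).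
Qed.
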